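(* Let $1<n\leq m$ and let $v\in Z_{n,m}$ with $\sum_{i\in I_c(v)}v_i=n$. Then $d(v,0)\leq\sum_{i=1}^{p_l(v)}i+\sum_{i=1}^{m-p_r(v)}i+\lfloor\frac{n(m+1)}{2}\rfloor$.
   Context: Elements of $\mathbb{Z}_n$ are identified with representatives in $\{0,\dots,n-1\}$ (so $v_0,v_{m+1}$ are such integers in sums). $Z_{n,m}$ has vertices $u=(u_0,\dots,u_{m+1})\in\mathbb{Z}_n\times\{-1,0,1\}^m\times\mathbb{Z}_n$ with $\sum u_i\equiv0\pmod n$; $u,v$ adjacent if there is $0\leq i\leq m$ with $u_j=v_j$ for $j\notin\{i,i+1\}$ and either ($u_i=v_i+1$, $u_{i+1}=v_{i+1}-1$) or ($u_i=v_i-1$, $u_{i+1}=v_{i+1}+1$), arithmetic in coordinates $0,m+1$ in $\mathbb{Z}_n$. $d$ is graph distance, $0$ the all-zero vertex. $\operatorname{Piv}(v)$ is the set of integers $-1\le p\le m+1$ with $n\mid\sum_{i=0}^pv_i$ (empty sum $0$). $p_l(v)=\max\{p\in\operatorname{Piv}(v):p<\frac m2\}$, $p_r(v)=\min\{p\in\operatorname{Piv}(v):p\ge\frac m2\}$, $I_c(v)=\{p_l(v)+1,\dots,p_r(v)\}$. Sums $\sum_{i=1}^k i$ with $k\le0$ are $0$. *)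

From mathcomp Require Import all_boot all_order all_algebra.
Set Implicit Arguments. Unset Strict Implicit. Unset Printing Implicit Defensive.
Import Order.TTheory GRing.Theory Num.Theory.
Local Open Scope ring_scope.

(* A vertex u = (u_0,...,u_{m+1}) of Z_{n,m} is encoded as a sequence of
   integers of size m+2; u_0, u_{m+1} are the representatives in {0,..,n-1}. *)
Definition coord (u : seq int) (i : nat) : int := nth 0 u i.

Definition is_vertex (n m : nat) (u : seq int) : bool :=
  [&& size u == m.+2,
      (0 <= coord u 0) && (coord u 0 < n%:Z),
      (0 <= coord u m.+1) && (coord u m.+1 < n%:Z),
      [forall i : 'I_m.+2, ((0 < i)%N && (i <= m)%N) ==>
          (coord u i \in [:: -1; 0; 1])]
    & (n%:Z %| \sum_(i < m.+2) coord u i)%Z].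

Definition ceq (n m : nat) (j : nat) (a b : int) : bool :=
  if (j == 0%N) || (j == m.+1) then (a == b %[mod n%:Z])%Z else a == b.

Definition adj (n m : nat) (u v : seq int) : bool :=
  [&& is_vertex n m u, is_vertex n m v &
   [exists i : 'I_m.+1,
     [forall j : 'I_m.+2, ((j != i :> nat) && (j != i.+1 :> nat)) ==>
                            (coord u j == coord v j)] &&
     ((ceq n m i (coord u i) (coord v i + 1) &&
       ceq n m i.+1 (coord u i.+1) (coord v i.+1 - 1)) ||
      (ceq n m i (coord u i) (coord v i - 1) &&
       ceq n m i.+1 (coord u i.+1) (coord v i.+1 + 1)))]].

Fixpoint dist_le (n m : nat) (u w : seq int) (k : nat) : Prop :=
  match k with
  | 0%N => u = w
  | k'.+1 => u = w \/ exists x, adj n m u x /\ dist_le n m x w k'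
  end.

Definition zero_vertex (m : nat) : seq int := nseq m.+2 0.

(* partial sum v_0 + ... + v_p, with p : int, p >= -1 (empty sum for p = -1) *)
Definition psum (v : seq int) (p : int) : int :=
  \sum_(i < absz (p + 1)) coord v i.

Definition piv (n m : nat) (v : seq int) (p : int) : bool :=
  [&& -1 <= p, p <= m.+1%:Z & (n%:Z %| psum v p)%Z].

(* p_l(v) = max { p in Piv(v) : p < m/2 }.  Candidates are p = q - 1 with
   q < m+3; p = -1 (q = 0) always qualifies, so the default 0 of the nat
   \max is harmless. *)
Definition pl_cand (n m : nat) (v : seq int) (q : nat) : bool :=
  piv n m v (q%:Z - 1) && (2%:R * (q%:Z - 1) < m%:Z).
Definition p_l (n m : nat) (v : seq int) : int :=
  (\max_(q < m.+3 | pl_cand n m v q) q)%N%:Z - 1.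

(* p_r(v) = min { p in Piv(v) : p >= m/2 }: the first q in 0,1,...,m+2 such
   that p = q - 1 qualifies (for a vertex, p = m+1 always qualifies). *)
Definition p_r (n m : nat) (v : seq int) : int :=
  (find (fun q : nat => piv n m v (q%:Z - 1) && (m%:Z <= 2%:R * (q%:Z - 1)))
        (iota 0 m.+3))%:Z - 1.

Definition sum_Ic (n m : nat) (v : seq int) : int :=
  \sum_(i < m.+2 | (p_l n m v < i%:Z) && (i%:Z <= p_r n m v)) coord v i.

Definition tri (k : int) : nat :=
  if k is Posz k' then (\sum_(1 <= i < k'.+1) i)%N else 0%N.

(* Write T_k(u) = u_0 + ... + u_(k-1) ([prefix u k]).  For a multiple c of n,
   the potential Phi_c(u) = sum_(p = 0..m) |T_(p+1)(u) - c| bounds d(u, 0):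
   if Phi_c(u) > 0, moving one unit across an extremum of T (in the direction
   of c) is an edge of Z_(n,m) that lowers the potential by one, and
   Phi_c(u) = 0 forces u = 0.
   Put L = p_l(v) + 1 and R = p_r(v) + 1.  Then a = T_L(v) and b = T_R(v) = a + n
   are consecutive multiples of n, no multiple of n is hit strictly in between,
   so T stays in [a, b] on [L, R], and outside it T moves by at most one per step.
   Hence Phi_a(v) + Phi_b(v) <= 2 (sum_(i <= p_l) i + sum_(i <= m - p_r) i)
   + n (m + 1), and the smaller potential gives the bound. *)

From mathcomp Require Import all_boot all_order all_algebra zify ring.
(* Imported last, so that [coord] denotes Defs.coord and not vector.coord. *)
From Pilot Require Import Defs.
Import Order.TTheory GRing.Theory Num.Theory.
Local Open Scope ring_scope.
Set Implicit Arguments. Unset Strict Implicit.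

Lemma unit_steps_ivt (g : nat -> int) lo hi c :
  (lo <= hi)%N -> (forall j, (lo <= j < hi)%N -> `|g j.+1 - g j| <= 1) ->
  g lo <= c <= g hi -> exists2 j, (lo <= j <= hi)%N & g j = c.
Proof.
move=> /subnKC <-; elim: (hi - lo)%N c => [|d IHd] c steps hc.
  by exists lo; rewrite addn0 in hc *; lia.
have [le_c|gt_c] := lerP c (g (lo + d)%N).
  have steps' j : (lo <= j < lo + d)%N -> `|g j.+1 - g j| <= 1.
    by move=> hj; apply: steps; lia.
  have /(IHd c steps')[j hj <-] : g lo <= c <= g (lo + d)%N by lia.
  by exists j => //; lia.
exists (lo + d.+1)%N; first lia.
have := steps (lo + d)%N; rewrite addnS in hc *; lia.
Qed.

Lemma unit_steps_lipschitz (g : nat -> int) lo hi :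
  (lo <= hi)%N -> (forall j, (lo <= j < hi)%N -> `|g j.+1 - g j| <= 1) ->
  `|g hi - g lo| <= (hi - lo)%N%:Z.
Proof.
move=> /subnKC <-; rewrite addKn; elim: (hi - lo)%N => [|d IHd] steps.
  by rewrite addn0 subrr.
have /IHd : forall j, (lo <= j < lo + d)%N -> `|g j.+1 - g j| <= 1.
  by move=> j hj; apply: steps; lia.
have := steps (lo + d)%N; rewrite addnS; lia.
Qed.

Lemma sum_ord_subSn k N : (k <= N)%N -> (\sum_(p < N) (k - p.+1))%N = 'C(k, 2).
Proof.
move=> le_kN; rewrite -(big_mkord xpredT (fun p => k - p.+1)%N).
rewrite (big_cat_nat (leq0n k) le_kN) /= [X in (_ + X)%N]big1_seq ?addn0; last first.
  by move=> p /andP [_]; rewrite mem_iota; lia.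
rewrite -bin2_sum big_rev_mkord subn0 big_mkord.
by apply: eq_bigr => i _; have := ltn_ord i; lia.
Qed.

Lemma sum_ord_Ssubn R N : (0 < R)%N -> (\sum_(p < N) (p.+1 - R))%N = 'C(N.+1 - R, 2).
Proof.
move=> R_gt0; rewrite -(@sum_ord_subSn _ N); last lia.
rewrite -(big_mkord xpredT (fun p => N.+1 - R - p.+1)%N) big_rev_mkord subn0.
by apply: eq_bigr => p _; have := ltn_ord p; lia.
Qed.

Lemma tri_subn1 k : tri (k%:Z - 1) = 'C(k, 2).
Proof.
case: k => [|k] //; rewrite (_ : k.+1%:Z - 1 = k%:Z); last lia.
by rewrite /tri -bin2_sum [RHS]big_ltn.
Qed.

Definition prefix (u : seq int) (k : nat) : int := \sum_(i < k) coord u i.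

Lemma prefix0 u : prefix u 0 = 0.
Proof. by rewrite /prefix big_ord0. Qed.

Lemma prefixS u k : prefix u k.+1 = prefix u k + coord u k.
Proof. by rewrite /prefix big_ord_recr. Qed.

Lemma psum_prefix u k : psum u (k%:Z - 1) = prefix u k.
Proof. by rewrite /psum subrK. Qed.

Lemma sum_coord_range u N L H : (L <= H <= N)%N ->
  \sum_(i < N | (L <= i < H)%N) coord u i = prefix u H - prefix u L.
Proof.
move=> /andP [le_LH le_HN].
rewrite /prefix (big_ord_widen N _ le_HN) (big_ord_widen N _ (leq_trans le_LH le_HN)).
rewrite big_mkcond [X in X - _]big_mkcond [X in _ - X]big_mkcond -sumrB.
apply: eq_bigr => i _; case: ifP; case: ifP; case: ifP; rewrite ?subrr ?subr0 //; lia.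
Qed.

Lemma dvdz_small (n : nat) (x : int) : (n%:Z %| x)%Z -> 0 <= x < n%:Z -> x = 0.
Proof. by move=> /dvdz_mod0P h hx; rewrite -(modz_small hx). Qed.

Lemma dist_le_mono n m u w k k' :
  (k <= k')%N -> dist_le n m u w k -> dist_le n m u w k'.
Proof.
elim: k' u k => [|k' IHk'] u [|k] //= le_kk'; first by move=> ->; left.
case=> [->|[x [hux hx]]]; first by left.
by right; exists x; split => //; exact: IHk' x k le_kk' hx.
Qed.

Section Vertex.
Variables n m : nat.
Local Notation vertex := (is_vertex n m).
Implicit Types u : seq int.

Lemma vertex_size u : vertex u -> size u = m.+2.
Proof. by case/and5P => /eqP. Qed.

Lemma vertex_first u : vertex u -> 0 <= coord u 0 < n%:Z.
Proof. by case/and5P. Qed.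

Lemma vertex_last u : vertex u -> 0 <= coord u m.+1 < n%:Z.
Proof. by case/and5P. Qed.

Lemma vertex_dvd_prefix u : vertex u -> (n%:Z %| prefix u m.+2)%Z.
Proof. by case/and5P. Qed.

Lemma vertex_inner u j : vertex u -> (0 < j <= m)%N -> `|coord u j| <= 1.
Proof.
case/and5P => _ _ _ /forallP inner _ hj; have hj2 : (j < m.+2)%N by lia.
by have := inner (Ordinal hj2); rewrite /= hj !inE /=; lia.
Qed.

Lemma prefix_unit_step u j : vertex u -> (0 < j <= m)%N ->
  `|prefix u j.+1 - prefix u j| <= 1.
Proof. by move=> hu hj; rewrite prefixS addrC addKr; exact: vertex_inner. Qed.

End Vertex.

Section Moves.
Variables n m : nat.
Local Notation vertex := (is_vertex n m).
Implicit Types (u : seq int) (c e : int).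

Definition reduce (j : nat) (a : int) : int :=
  if (j == 0%N) || (j == m.+1) then (a %% n%:Z)%Z else a.

Lemma reduce_dvd j a : (n%:Z %| reduce j a - a)%Z.
Proof.
rewrite /reduce; case: ifP => _; last by rewrite subrr dvdz0.
by rewrite -eqz_mod_dvd; apply/eqP; exact: modz_mod.
Qed.

Lemma reduce_inner j a : (0 < j <= m)%N -> reduce j a = a.
Proof. by move=> hj; rewrite /reduce ifF //; lia. Qed.

Lemma ceq_reduce j a b : ceq n m j (a + b) (reduce j a + b).
Proof. by rewrite /ceq /reduce; case: (_ || _); rewrite ?modzDml. Qed.

Definition shift u (i : nat) (e : int) : seq int :=
  mkseq (fun j => if j == i then reduce j (coord u j - e)
                  else if j == i.+1 then reduce j (coord u j + e)
                  else coord u j) m.+2.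

Lemma coord_shift u i e j : (j < m.+2)%N ->
  coord (shift u i e) j = if j == i then reduce j (coord u j - e)
                          else if j == i.+1 then reduce j (coord u j + e)
                          else coord u j.
Proof. by move=> hj; rewrite /coord /shift nth_mkseq. Qed.

Lemma prefix_shift u i e k : (k <= m.+2)%N ->
  prefix (shift u i e) k = prefix u k
    + (if (i < k)%N then reduce i (coord u i - e) - coord u i else 0)
    + (if (i.+1 < k)%N then reduce i.+1 (coord u i.+1 + e) - coord u i.+1 else 0).
Proof.
elim: k => [|k IHk] hk; first by rewrite !prefix0 !addr0.
rewrite !prefixS IHk ?(ltnW hk) // coord_shift //.
have [->|ne_ki] := eqVneq k i; first by (repeat case: ifP => ?); lia.
have [->|ne_kSi] := eqVneq k i.+1; first by (repeat case: ifP => ?); lia.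
by (repeat case: ifP => ?); lia.
Qed.

Lemma prefix_shift_inner u i e : (i <= m)%N ->
  exists2 t, (n%:Z %| t)%Z & forall p, (p <= m)%N ->
    prefix (shift u i e) p.+1 = prefix u p.+1 + t - (p == i)%:R * e.
Proof.
move=> hi; set t := if i == 0%N then reduce i (coord u i - e) - (coord u i - e) else 0.
have red_i : reduce i (coord u i - e) = coord u i - e + t.
  rewrite /t; have [->|i_gt0] := posnP i; first by ring.
  by rewrite reduce_inner ?addr0 //; lia.
exists t; first by rewrite /t; case: ifP => _; [exact: reduce_dvd | exact: dvdz0].
move=> p hp; rewrite prefix_shift ?red_i; last lia.
have [lt_pi|lt_ip|->] := ltngtP p i.
- by rewrite /t !ifF ?mul0r; lia.
- by rewrite !ifT ?reduce_inner ?mul0r; lia.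
- by rewrite ltnSn ltnn mul1r; lia.
Qed.

Definition potential u (c : int) : nat := \sum_(p < m.+1) absz (prefix u p.+1 - c).

Lemma potential_shift u c i e : (i <= m)%N -> (n%:Z %| c)%Z -> (e = 1 \/ e = -1) ->
  1 <= (prefix u i.+1 - c) * e ->
  exists2 c', (n%:Z %| c')%Z & (potential (shift u i e) c').+1 = potential u c.
Proof.
move=> hi hc he closer; have [t ht prefixE] := prefix_shift_inner u e hi.
exists (c + t); first exact: rpredD.
pose i' := Ordinal (hi : (i < m.+1)%N).
rewrite /potential (bigD1 i') // [RHS](bigD1 i') // -[nat_of_ord i']/i.
rewrite (prefixE i hi) eqxx mul1r.
rewrite (eq_bigr (fun p : 'I_m.+1 => absz (prefix u p.+1 - c))); last first.
  move=> p ne_pi; rewrite (prefixE p (ltn_ord p)) (_ : (p == i :> nat) = false) ?mul0r.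
    by congr absz; ring.
  by apply/negbTE; apply: contra ne_pi => /eqP eq_pi; apply/eqP/val_inj.
have shift_i : (absz (prefix u i.+1 + t - e - (c + t))%R).+1 = absz (prefix u i.+1 - c).
  by case: he closer => ->; lia.
by rewrite -shift_i.
Qed.

Lemma potential_extremal u c : potential u c != 0%N ->
  exists e i, [/\ e = 1 \/ e = -1, (i <= m)%N, 1 <= (prefix u i.+1 - c) * e
                & forall p, (p <= m)%N -> prefix u p.+1 * e <= prefix u i.+1 * e].
Proof.
rewrite /potential sum_nat_eq0 negb_forall => /existsP [p0 /=]; rewrite absz_eq0 => ne_p0.
have [e [he e_p0]] : exists e, (e = 1 \/ e = -1) /\ 1 <= (prefix u p0.+1 - c) * e.
  by case: (ltrP c (prefix u p0.+1)) => h; [exists 1 | exists (-1)]; split; lia.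
case: (@arg_maxP _ _ _ p0 xpredT (fun q : 'I_m.+1 => prefix u q.+1 * e)) => // i _ imax.
exists e, i; split => //; first by rewrite -ltnS.
  by have := imax p0 isT; case: he e_p0 => ->; lia.
by move=> p hp; exact: (imax (Ordinal (hp : (p < m.+1)%N))).
Qed.

Lemma potential_eq0 u c : vertex u -> (n%:Z %| c)%Z -> potential u c = 0%N ->
  u = zero_vertex m.
Proof.
move=> hu hc /eqP; rewrite sum_nat_eq0 => /forallP flat.
have prefix_c p : (p <= m)%N -> prefix u p.+1 = c.
  by move=> hp; have /= := flat (Ordinal (hp : (p < m.+1)%N)); rewrite absz_eq0 subr_eq0 => /eqP.
have c0 : c = 0.
  apply: dvdz_small hc _; rewrite -(prefix_c 0%N) // prefixS prefix0 add0r.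
  exact: vertex_first hu.
have prefix_eq0 j : (j <= m.+2)%N -> prefix u j = 0.
  case: j => [_|j hj]; first exact: prefix0.
  have [le_jm|gt_jm] := leqP j m; first by rewrite prefix_c.
  have -> : j = m.+1 by lia.
  apply: dvdz_small (vertex_dvd_prefix hu) _.
  by rewrite prefixS prefix_c // c0 add0r; exact: vertex_last.
apply: (@eq_from_nth _ 0); first by rewrite (vertex_size hu) size_nseq.
move=> j; rewrite (vertex_size hu) => hj; rewrite nth_nseq hj.
by have := prefixS u j; rewrite !prefix_eq0 // ?(ltnW hj) /coord; lia.
Qed.

Hypothesis n_gt1 : (1 < n)%N.

Lemma shift_vertex u i e : vertex u -> (i <= m)%N ->
  ((0 < i)%N -> `|coord u i - e| <= 1) ->
  ((i < m)%N -> `|coord u i.+1 + e| <= 1) ->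
  vertex (shift u i e).
Proof.
move=> hu hi inner_i inner_Si.
have mod_range a : 0 <= (a %% n%:Z)%Z < n%:Z by rewrite modz_ge0 ?ltz_pmod //; lia.
apply/and5P; split.
- by rewrite size_mkseq.
- by rewrite coord_shift //; case: ifP => _; [exact: mod_range | exact: vertex_first hu].
- rewrite coord_shift // ifF; last lia.
  by case: ifP => _; [rewrite /reduce eqxx orbT; exact: mod_range | exact: vertex_last hu].
- apply/forallP => j; apply/implyP => hj; rewrite coord_shift // !inE.
  have [eq_ji|ne_ji] := eqVneq (j : nat) i.
    by move: hj; rewrite eq_ji => hj; rewrite reduce_inner //; have := inner_i; lia.
  have [eq_jSi|ne_jSi] := eqVneq (j : nat) i.+1.
    move: hj; rewrite eq_jSi => hj.
    by rewrite reduce_inner //; have := inner_Si; lia.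
  by have := vertex_inner hu hj; lia.
- rewrite -/(prefix _ m.+2) prefix_shift // !ifT //; last lia.
  have -> : forall a b b' c c' : int, a + (b' - b) + (c' - c) =
      a + (b' - (b - e)) + (c' - (c + e)) by move=> *; ring.
  by apply/rpredD/reduce_dvd; apply/rpredD/reduce_dvd; exact: vertex_dvd_prefix.
Qed.

Lemma shift_adj u i e : vertex u -> (i <= m)%N -> (e = 1 \/ e = -1) ->
  ((0 < i)%N -> `|coord u i - e| <= 1) ->
  ((i < m)%N -> `|coord u i.+1 + e| <= 1) ->
  adj n m u (shift u i e).
Proof.
move=> hu hi he inner_i inner_Si.
apply/and3P; split => //; first exact: shift_vertex.
apply/existsP; exists (Ordinal (hi : (i < m.+1)%N)); apply/andP; split.
  apply/forallP => j; apply/implyP => /andP [/negbTE ne_ji /negbTE ne_jSi].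
  by rewrite coord_shift //= ne_ji ne_jSi.
change (nat_of_ord (Ordinal _)) with i.
rewrite !coord_shift ?ltnS ?(leq_trans hi) // eqxx (gtn_eqF (ltnSn i)) eqxx.
have ceq_sub e' j a : ceq n m j a (reduce j (a - e') + e').
  by rewrite -{1}(subrK e' a) ceq_reduce.
have ceq_add e' j a : ceq n m j a (reduce j (a + e') - e').
  by rewrite -{1}(addrK e' a) ceq_reduce.
case: he => ->; apply/orP; [left|right].
- by rewrite (ceq_sub 1) (ceq_add 1).
- by rewrite (ceq_sub (-1)) (ceq_sub 1).
Qed.

Lemma potential_descent u c k : vertex u -> (n%:Z %| c)%Z -> potential u c = k.+1 ->
  exists x c', [/\ adj n m u x, (n%:Z %| c')%Z & potential x c' = k].
Proof.
move=> hu hc hk; have [|e [i [he hi closer emax]]] := @potential_extremal u c.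
  by rewrite hk.
have [c' hc' dec] := potential_shift hi hc he closer.
exists (shift u i e), c'; split => //; last by apply: succn_inj; rewrite dec.
(* As i maximises e * T, e * u_i >= 0 >= e * u_(i+1), so the inner coordinates
   stay in {-1, 0, 1}. *)
apply: shift_adj => // [i_gt0|lt_im].
- have := emax i.-1 (leq_trans (leq_pred i) hi); rewrite prednK // prefixS.
  have inner_i : (0 < i <= m)%N by rewrite i_gt0.
  have := vertex_inner hu inner_i.
  by case: he => ->; lia.
- have := emax i.+1 lt_im; rewrite (prefixS u i.+1).
  have := vertex_inner hu (lt_im : (0 < i.+1 <= m)%N).
  by case: he => ->; lia.
Qed.

Lemma dist_le_potential u c : vertex u -> (n%:Z %| c)%Z ->
  dist_le n m u (zero_vertex m) (potential u c).
Proof.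
move=> hu hc; move hk: (potential u c) => k.
elim: k u c hk hu hc => [|k IHk] u c hk hu hc /=; first exact: potential_eq0 hu hc hk.
right; have [x [c' [hx hc' hk']]] := potential_descent hu hc hk.
by exists x; split => //; apply: IHk hk' _ hc'; case/and3P: hx.
Qed.

End Moves.

Section Pivots.
Variables n m : nat.
Local Notation vertex := (is_vertex n m).
Implicit Types v : seq int.

Lemma piv_prefix v q :
  piv n m v (q%:Z - 1) = (q <= m.+2)%N && (n%:Z %| prefix v q)%Z.
Proof.
rewrite /piv psum_prefix; case: (n%:Z %| _)%Z; rewrite ?andbT ?andbF //.
by apply/idP/idP; lia.
Qed.

Lemma pivots_spec v : vertex v ->
  exists L R : nat,
    [/\ p_l n m v = L%:Z - 1, p_r n m v = R%:Z - 1 & (L < R <= m.+2)%N] /\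
    [/\ (n%:Z %| prefix v L)%Z, (n%:Z %| prefix v R)%Z
      & forall k, (L < k < R)%N -> ~~ (n%:Z %| prefix v k)%Z].
Proof.
move=> hv; set L := (\max_(q < m.+3 | pl_cand n m v q) q)%N.
set right_cand := fun q : nat => piv n m v (q%:Z - 1) && (m%:Z <= 2%:R * (q%:Z - 1)).
set R := find right_cand (iota 0 m.+3).
have L_cand : pl_cand n m v L.
  apply: (big_ind (pl_cand n m v)) => [|x y hx hy|//].
    by rewrite /pl_cand piv_prefix prefix0 dvdz0; lia.
  by rewrite /maxn; case: ifP.
have L_max q : (q < m.+3)%N -> pl_cand n m v q -> (q <= L)%N.
  move=> hq; exact: (@leq_bigmax_cond _ (fun q : 'I_m.+3 => pl_cand n m v q)
                                        (fun q => nat_of_ord q) (Ordinal hq)).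
have has_right : has right_cand (iota 0 m.+3).
  apply/hasP; exists m.+2; first by rewrite mem_iota; lia.
  by rewrite /right_cand piv_prefix vertex_dvd_prefix // leqnn; lia.
have R_lt : (R < m.+3)%N by rewrite -(size_iota 0 m.+3) -has_find.
have R_cand : right_cand R by have := nth_find 0 has_right; rewrite nth_iota.
have R_min q : (q < R)%N -> ~~ right_cand q.
  by move=> hq; have := before_find 0 hq; rewrite nth_iota ?(ltn_trans hq) // => ->.
move: L_cand R_cand; rewrite /pl_cand /right_cand !piv_prefix.
move=> /andP [/andP [le_L dvdL] L_left] /andP [/andP [le_R dvdR] R_right].
exists L, R; split; split => //; first lia.
move=> k hk; apply/negP => dvdk.
have [k_left|k_right] := ltrP (2%:R * (k%:Z - 1)) m%:Z.
  have := L_max k; rewrite /pl_cand piv_prefix dvdk k_left andbT; lia.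
by have := R_min k; rewrite /right_cand piv_prefix dvdk k_right andbT; lia.
Qed.

Lemma sum_Ic_prefix v L R : p_l n m v = L%:Z - 1 -> p_r n m v = R%:Z - 1 ->
  (L <= R <= m.+2)%N -> sum_Ic n m v = prefix v R - prefix v L.
Proof.
move=> pl pr hLR; rewrite /sum_Ic pl pr -(@sum_coord_range _ m.+2) //.
by apply: eq_bigl => i; apply/idP/idP; lia.
Qed.

Lemma prefix_between_pivots v L R : (0 < n)%N -> vertex v -> (L < R <= m.+2)%N ->
  prefix v R = prefix v L + n%:Z -> (n%:Z %| prefix v L)%Z ->
  (forall k, (L < k < R)%N -> ~~ (n%:Z %| prefix v k)%Z) ->
  forall j, (L <= j <= R)%N -> prefix v L <= prefix v j <= prefix v R.
Proof.
move=> n_gt0 hv hLR hRL dvdL nopiv j hj.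
have [->|ne_jL] := eqVneq j L; first lia.
have [->|ne_jR] := eqVneq j R; first lia.
have steps k : (0 < k <= m)%N -> `|prefix v k.+1 - prefix v k| <= 1.
  exact: prefix_unit_step hv.
(* T has unit steps only between indices 1 and m + 1, hence the clamping to
   that range; beyond it, v_0 and v_(m+1) lie in [0, n). *)
apply/andP; split; rewrite leNgt; apply/negP => cross.
- have hi_ge : prefix v L <= prefix v (minn R m.+1).
    have [le_R|gt_R] := leqP R m.+1; first lia.
    by move: hRL; rewrite (_ : R = m.+2) ?prefixS; [have := vertex_last hv; lia | lia].
  have [k hk vk] : exists2 k, (j <= k <= minn R m.+1)%N & prefix v k = prefix v L.
    by apply: unit_steps_ivt => [|k hk|]; [lia | apply: steps; lia | lia].
  have k_inner : (L < k < R)%N.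
    suff : k != R by lia.
    by apply/eqP => eq_kR; move: vk; rewrite eq_kR hRL; lia.
  by have := nopiv k k_inner; rewrite vk dvdL.
- have lo_le : prefix v (maxn L 1) <= prefix v L + n%:Z.
    have [L0|L_gt0] := posnP L; last by rewrite (_ : maxn L 1 = L); lia.
    by rewrite L0 prefixS !prefix0 add0r; have := vertex_first hv; lia.
  have [k hk vk] : exists2 k, (maxn L 1 <= k <= j)%N & prefix v k = prefix v L + n%:Z.
    by apply: unit_steps_ivt => [|k hk|]; [lia | apply: steps; lia | lia].
  have k_inner : (L < k < R)%N.
    suff : k != L by lia.
    by apply/eqP => eq_kL; move: vk; rewrite eq_kL; lia.
  by have := nopiv k k_inner; rewrite vk rpredD ?dvdzz.
Qed.

Lemma potential_pair_bound v L R : vertex v -> (L < R <= m.+2)%N ->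
  prefix v R = prefix v L + n%:Z ->
  (forall j, (L <= j <= R)%N -> prefix v L <= prefix v j <= prefix v R) ->
  (potential m v (prefix v L) + potential m v (prefix v R)
     <= 2 * ('C(L, 2) + 'C(m.+2 - R, 2)) + n * m.+1)%N.
Proof.
move=> hv hLR hRL between; have le_Lm : (L <= m.+1)%N by lia.
have R_gt0 : (0 < R)%N by lia.
have steps lo hi : (0 < lo)%N -> (hi <= m.+1)%N ->
    forall k, (lo <= k < hi)%N -> `|prefix v k.+1 - prefix v k| <= 1.
  by move=> lo_gt0 hi_le k hk; apply: prefix_unit_step hv _; lia.
have term p : (p <= m)%N ->
    (absz (prefix v p.+1 - prefix v L) + absz (prefix v p.+1 - prefix v R)
      <= 2 * ((L - p.+1) + (p.+1 - R)) + n)%N.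
  move=> hp; have [lt_pL|le_Lp] := ltnP p.+1 L.
    have := unit_steps_lipschitz (ltnW lt_pL) (steps _ _ (ltn0Sn p) le_Lm); lia.
  have [lt_Rp|le_pR] := ltnP R p.+1; last by have := between p.+1; lia.
  have := unit_steps_lipschitz (ltnW lt_Rp) (steps _ _ R_gt0 (hp : (p.+1 <= m.+1)%N)); lia.
rewrite /potential -big_split /=.
apply: (@leq_trans (\sum_(p < m.+1) (2 * ((L - p.+1) + (p.+1 - R)) + n))%N).
  by apply: leq_sum => p _; exact: (term p (ltn_ord p)).
rewrite big_split /= -big_distrr /= big_split /= sum_ord_subSn // sum_ord_Ssubn //.
by rewrite sum_nat_const card_ord; lia.
Qed.

End Pivots.

Theorem lemma5p25 (n m : nat) (v : seq int) :
  (1 < n)%N -> (n <= m)%N -> is_vertex n m v ->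
  sum_Ic n m v = n%:Z ->
  dist_le n m v (zero_vertex m)
    (tri (p_l n m v) + tri (m%:Z - p_r n m v) + (n * m.+1) %/ 2)%N.
Proof.
move=> n_gt1 _ hv hIc.
have [L [R [[pl pr hLR] [dvdL dvdR nopiv]]]] := pivots_spec hv.
have hRL : prefix v R = prefix v L + n%:Z.
  by move: hIc; rewrite (sum_Ic_prefix pl pr) ?(ltnW hLR); lia.
have between := prefix_between_pivots (ltnW n_gt1) hv hLR hRL dvdL nopiv.
have bound := potential_pair_bound hv hLR hRL between.
rewrite pl pr tri_subn1 (_ : m%:Z - (R%:Z - 1) = (m.+2 - R)%N%:Z - 1); last lia.
rewrite tri_subn1.
have [le_LR|lt_RL] := leqP (potential m v (prefix v L)) (potential m v (prefix v R)).
  by apply: dist_le_mono (dist_le_potential n_gt1 hv dvdL); lia.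
by apply: dist_le_mono (dist_le_potential n_gt1 hv dvdR); lia.
Qed.
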